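(* In the Poisson algebra $\mathbb C[\mathfrak Z_d]$ one has, for all $r,s$ for which the elements are defined, $\{a_r,a_s\}=0$, $\{a_r,b_s\}=r\,b_{r+s-1}$, and for $r\ge s$, $\{b_r,b_s\}=\sum_{m=s}^{r-1}b_m b_{r+s-m-1}$.
   Context: Let $V=\mathbb C^d$. Let $\mathfrak a=(\mathfrak{gl}(V)\ltimes V)\oplus(\mathfrak{gl}(V)\ltimes V^* )$ with basis $e_{ij}$ (standard matrix units of the first copy of $\mathfrak{gl}(V)$), $e'_{ij}$ (standard matrix units of the second copy), $q_i$ (a basis of $V$), $p_i$ (a basis of $V^*$), $1\le i,j\le d$, with brackets the standard $\mathfrak{gl}$ brackets among the $e_{ij}$ and among the $e'_{ij}$, $[e_{ij},q_k]=\delta_{jk}q_i$, $[e'_{ij},p_k]=-\delta_{ki}p_j$, and all other brackets of basis elements ($[e_{ij},e'_{kl}],[e_{ij},p_k],[e'_{ij},q_k],[p_k,q_l],[q_k,q_l],[p_k,p_l]$) zero. The symmetric algebra $S(\mathfrak a)=\mathbb C[\mathfrak a^*]$ carries the Lie–Poisson bracket. Let $\mathfrak{gl}(V)_{\rm diag}$ be spanned by $e_{ij}+e'_{ij}$. Define the Poisson algebra (Hamiltonian reduction) $\mathbb C[\mathfrak Z_d]:=\big(S(\mathfrak a)/S(\mathfrak a)\mathfrak{gl}(V)_{\rm diag}\big)^{\mathfrak{gl}(V)_{\rm diag}}$ with the induced bracket; it is identified with $\mathbb C[e_{ij},q_i,p_i]^{\mathfrak{gl}(V)}$. Set $a_r=\sum_{i_1,\dots,i_r}e_{i_1i_2}e_{i_2i_3}\cdots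 e_{i_ri_1}$ ($r\ge1$) and $b_s=\sum_{i_1,\dots,i_{s+1}}p_{i_1}e_{i_1i_2}\cdots e_{i_si_{s+1}}q_{i_{s+1}}$ ($s\ge 0$). *)

From HB Require Import structures.
From mathcomp Require Import all_boot all_order all_algebra.
From mathcomp Require Import mpoly.
Set Implicit Arguments. Unset Strict Implicit. Unset Printing Implicit Defensive.
Import Order.TTheory GRing.Theory Num.Theory.
Local Open Scope ring_scope.

(* Basis of the Lie algebra a = (gl(V) ⋉ V) ⊕ (gl(V) ⋉ V^* ), V = C^d:
   e_ij, e'_ij, q_i, p_i  (indices 0..d-1). *)
Definition avar (d : nat) : finType :=
  ((('I_d * 'I_d) + ('I_d * 'I_d)) + ('I_d + 'I_d))%type.
Definition vE  {d} (i j : 'I_d) : avar d := inl (inl (i, j)).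
Definition vE' {d} (i j : 'I_d) : avar d := inl (inr (i, j)).
Definition vQ  {d} (i : 'I_d) : avar d := inr (inl i).
Definition vP  {d} (i : 'I_d) : avar d := inr (inr i).

Definition rvar (d : nat) : finType := (('I_d * 'I_d) + ('I_d + 'I_d))%type.
Definition rE {d} (i j : 'I_d) : rvar d := inl (i, j).
Definition rQ {d} (i : 'I_d) : rvar d := inr (inl i).
Definition rP {d} (i : 'I_d) : rvar d := inr (inr i).

(* S(a) = C[a^*] : polynomials in #|avar d| variables;
   C[e,q,p] : polynomials in #|rvar d| variables. *)
Definition Sa (C : numClosedFieldType) (d : nat) := {mpoly C[#|avar d|]}.
Definition Sr (C : numClosedFieldType) (d : nat) := {mpoly C[#|rvar d|]}.

Definition xa {C : numClosedFieldType} {d} (x : avar d) : Sa C d :=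
  'X_(enum_rank x).
Definition xr {C : numClosedFieldType} {d} (y : rvar d) : Sr C d :=
  'X_(enum_rank y).

Definition kd {C : numClosedFieldType} {d} (i j : 'I_d) : C :=
  if i == j then 1 else 0.

(* Lie bracket of basis elements of a, as (linear) elements of S(a). *)
Definition abr {C : numClosedFieldType} {d} (x y : avar d) : Sa C d :=
  match x, y with
  | inl (inl (i, j)), inl (inl (k, l)) =>
      (kd j k) *: xa (vE i l) - (kd l i) *: xa (vE k j)
  | inl (inr (i, j)), inl (inr (k, l)) =>
      (kd j k) *: xa (vE' i l) - (kd l i) *: xa (vE' k j)
  | inl (inl (i, j)), inr (inl k) => (kd j k) *: xa (vQ i)
  | inr (inl k), inl (inl (i, j)) => - ((kd j k) *: xa (vQ i))
  | inl (inr (i, j)), inr (inr k) => - ((kd k i) *: xa (vP j))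
  | inr (inr k), inl (inr (i, j)) => (kd k i) *: xa (vP j)
  | _, _ => 0
  end.

(* Lie–Poisson bracket on S(a):  {f,g} = sum_{x,y} [x,y] df/dx dg/dy. *)
Definition LP {C : numClosedFieldType} {d} (f g : Sa C d) : Sa C d :=
  \sum_(x : avar d) \sum_(y : avar d)
     abr x y * (mderiv (enum_rank x) f * mderiv (enum_rank y) g).

Definition incl_var {C : numClosedFieldType} {d} (k : 'I_#|rvar d|) : Sa C d :=
  match enum_val k with
  | inl (i, j) => xa (vE i j)
  | inr (inl i) => xa (vQ i)
  | inr (inr i) => xa (vP i)
  end.
Definition incl {C : numClosedFieldType} {d} (f : Sr C d) : Sa C d :=
  mmap (@mpolyC _ C) incl_var f.

(* Quotient map S(a) -> S(a)/S(a) gl(V)_diag  identified with C[e,q,p]: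
   e_ij |-> e_ij, e'_ij |-> -e_ij (since e_ij + e'_ij = 0), q |-> q, p |-> p. *)
Definition proj_var {C : numClosedFieldType} {d} (k : 'I_#|avar d|) : Sr C d :=
  match enum_val k with
  | inl (inl (i, j)) => xr (rE i j)
  | inl (inr (i, j)) => - xr (rE i j)
  | inr (inl i) => xr (rQ i)
  | inr (inr i) => xr (rP i)
  end.
Definition proj {C : numClosedFieldType} {d} (F : Sa C d) : Sr C d :=
  mmap (@mpolyC _ C) proj_var F.

(* Induced (reduced) Poisson bracket on C[Z_d] = C[e,q,p]^{gl(V)}:
   lift to S(a), take the Lie–Poisson bracket, project to the quotient. *)
Definition rbr {C : numClosedFieldType} {d} (f g : Sr C d) : Sr C d :=
  proj (LP (incl f) (incl g)).

Definition a_ {C : numClosedFieldType} {d} (r : nat) : Sr C d :=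
  \sum_(f : {ffun 'I_r -> 'I_d}) \prod_(k < r) xr (rE (f k) (f (ordS k))).

Definition b_ {C : numClosedFieldType} {d} (s : nat) : Sr C d :=
  \sum_(f : {ffun 'I_s.+1 -> 'I_d})
     xr (rP (f ord0)) *
     (\prod_(k < s) xr (rE (f (widen_ord (leqnSn s) k)) (f (lift ord0 k)))) *
     xr (rQ (f ord_max)).

(* Let E = (e_ij) be the matrix of the generators e_ij, q the column (q_i) and p the
   row (p_i), so that a_r = tr E^r and b_s = p E^s q.  For fixed h, both f |-> {f, h}
   and f |-> {h, f} are derivations, so applied entrywise to matrices they obey the
   Leibniz rule for matrix products and powers.  On the generators, {-, e_kl} acts on E
   as the commutator with an elementary matrix, hence kills every tr E^r, while
   {-, q_k} acts on E as the rank-one matrix q e_k^T.  Consequently {a_r, -} kills all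
   e_kl and p_k and sends q to r E^(r-1) q, and {b_r, -} sends E to -E^r q p, q to
   sum_m b_m E^(r-m-1) q and p to 0.  The three formulas follow by the Leibniz rule; in
   the last one the sum coming from E is the reversal of the first s terms of the sum
   coming from q, and cancels them. *)

From HB Require Import structures.
From mathcomp Require Import all_boot all_order all_algebra.
From mathcomp Require Import mpoly.
From mathcomp Require Import ring zify.
Import GRing.Theory.
Local Open Scope ring_scope.
Set Implicit Arguments. Unset Strict Implicit.

Definition fcons (T : Type) n (x : T) (g : {ffun 'I_n -> T}) : {ffun 'I_n.+1 -> T} :=
  [ffun k => if unlift ord0 k is Some k' then g k' else x].

Lemma fcons0 (T : Type) n (x : T) (g : {ffun 'I_n -> T}) : fcons x g ord0 = x.
Proof. by rewrite ffunE unlift_none. Qed.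

Lemma fconsS (T : Type) n (x : T) (g : {ffun 'I_n -> T}) k :
  fcons x g (lift ord0 k) = g k.
Proof. by rewrite ffunE liftK. Qed.

Lemma sum_ffunS (V : nmodType) (T : finType) n (F : {ffun 'I_n.+1 -> T} -> V) :
  \sum_f F f = \sum_(x : T) \sum_(g : {ffun 'I_n -> T}) F (fcons x g).
Proof.
rewrite pair_big (reindex (fun xg : T * _ => fcons xg.1 xg.2)) //=.
exists (fun f => (f ord0, [ffun k => f (lift ord0 k)])) => [[x g] _ | f _] /=.
  by rewrite fcons0; congr (_, _); apply/ffunP => k; rewrite ffunE fconsS.
by apply/ffunP => k; rewrite ffunE; case: unliftP => [k'|] ->; rewrite ?ffunE.
Qed.

Lemma sum_paths_expmx (R : comPzSemiRingType) d n (A : 'M[R]_d) (H : 'I_d -> 'I_d -> R) :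
  \sum_(f : {ffun 'I_n.+1 -> 'I_d})
     H (f ord0) (f ord_max) *
     \prod_(k < n) A (f (widen_ord (leqnSn n) k)) (f (lift ord0 k))
  = \sum_i \sum_j H i j * (A ^+ n) i j.
Proof.
elim: n H => [|n IHn] H; rewrite sum_ffunS; apply: eq_bigr => i _.
  have -> : (ord_max : 'I_1) = ord0 by apply/val_inj.
  under eq_bigr do rewrite fcons0 big_ord0 mulr1.
  rewrite sumr_const card_ffun !card_ord expn0 (bigD1 i) //= big1 => [|j /negPf nij].
    by rewrite expr0 mxE eqxx mulr1 addr0.
  by rewrite expr0 mxE eq_sym nij mulr0.
have maxS : (ord_max : 'I_n.+2) = lift ord0 (ord_max : 'I_n.+1) by apply/val_inj.
transitivity (\sum_(g : {ffun 'I_n.+1 -> 'I_d})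
    (fun j l => A i j * H i l) (g ord0) (g ord_max) *
    \prod_(k < n) A (g (widen_ord (leqnSn n) k)) (g (lift ord0 k))).
  apply: eq_bigr => g _; rewrite maxS fcons0 fconsS big_ord_recl /= mulrCA.
  have -> : widen_ord (leqnSn n.+1) ord0 = ord0 by apply/val_inj.
  rewrite fcons0 fconsS mulrA; congr (_ * _); apply: eq_bigr => k _.
  have -> : widen_ord (leqnSn n.+1) (lift ord0 k) = lift ord0 (widen_ord (leqnSn n) k)
    by apply/val_inj.
  by rewrite !fconsS.
rewrite (IHn (fun j l => A i j * H i l)) exchange_big; apply: eq_bigr => l _.
rewrite exprS -mulmxE mxE mulr_sumr; apply: eq_bigr => j _.
by rewrite mulrCA mulrA.
Qed.

Lemma mul_mx_deltaE (R : pzSemiRingType) m n p (A : 'M[R]_(m, n)) (a : 'I_n) (b : 'I_p) i j :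
  (A *m delta_mx a b) i j = A i a *+ (j == b).
Proof.
rewrite mxE (bigD1 a) //= big1 => [|k /negPf ka]; last by rewrite mxE ka mulr0.
by rewrite mxE eqxx addr0 mulr_natr.
Qed.

Lemma mul_delta_mxE (R : pzSemiRingType) m n p (a : 'I_m) (b : 'I_n) (A : 'M[R]_(n, p)) i j :
  (delta_mx a b *m A) i j = A b j *+ (i == a).
Proof.
rewrite mxE (bigD1 b) //= big1 => [|k /negPf kb]; last by rewrite mxE kb andbF mul0r.
by rewrite mxE eqxx andbT addr0 mulr_natl.
Qed.

Lemma mul_col_rowE (R : pzSemiRingType) m n (x : 'M[R]_(m, 1)) (y : 'M[R]_(1, n)) i j :
  (x *m y) i j = x i 0 * y 0 j.
Proof. by rewrite mxE big_ord1. Qed.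

Lemma mul_row_delta_colE (R : pzSemiRingType) n (u : 'rV[R]_n) (w : 'cV[R]_n) l k :
  (u *m delta_mx l k *m w) 0 0 = u 0 l * w k 0.
Proof.
rewrite -mulmxA mxE (bigD1 l) //= big1 => [|j /negPf jl]; last first.
  by rewrite mul_delta_mxE jl mulr0.
by rewrite mul_delta_mxE eqxx addr0.
Qed.

Lemma mulmx_expmx (R : pzSemiRingType) n (A : 'M[R]_n) a b :
  A ^+ a *m A ^+ b = A ^+ (a + b).
Proof. by rewrite exprD mulmxE. Qed.

Record derivation (R : pzRingType) (D : R -> R) : Prop := Derivation {
  derivationD : {morph D : x y / x + y};
  derivationM : forall x y, D (x * y) = D x * y + x * D y }.

Section MatrixDerivation.
Variables (R : pzRingType) (D : R -> R).
Hypothesis Dder : derivation D.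

Lemma derivation0 : D 0 = 0.
Proof. by apply: (@addrI _ (D 0)); rewrite -derivationD // !addr0. Qed.

Lemma derivation_sum I (r : seq I) (P : pred I) (F : I -> R) :
  D (\sum_(i <- r | P i) F i) = \sum_(i <- r | P i) D (F i).
Proof. exact: (big_morph D (derivationD Dder) derivation0). Qed.

Lemma derivation_nat n : D n%:R = 0.
Proof.
have D1 : D 1 = 0.
  have := derivationM Dder 1 1; rewrite !mulr1 mul1r => D1.
  by apply: (@addrI _ (D 1)); rewrite -D1 addr0.
by elim: n => [|n IHn]; rewrite ?derivation0 // -addn1 natrD derivationD // IHn D1 addr0.
Qed.

Lemma map_mx_derivation_mul m n p (A : 'M[R]_(m, n)) (B : 'M[R]_(n, p)) :
  map_mx D (A *m B) = map_mx D A *m B + A *m map_mx D B.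
Proof.
apply/matrixP => i j; rewrite !mxE derivation_sum -big_split.
by apply: eq_bigr => k _; rewrite !mxE derivationM.
Qed.

Lemma derivation_bilinear_form n (u : 'rV[R]_n) (M : 'M[R]_n) (w : 'cV[R]_n) :
  D ((u *m M *m w) 0 0) =
  (map_mx D u *m M *m w + u *m map_mx D M *m w + u *m M *m map_mx D w) 0 0.
Proof.
transitivity (map_mx D (u *m M *m w) 0 0); first by rewrite [RHS]mxE.
by rewrite !map_mx_derivation_mul mulmxDl.
Qed.

Lemma derivation_trace n (A : 'M[R]_n) : D (\tr A) = \tr (map_mx D A).
Proof. by rewrite derivation_sum; apply: eq_bigr => i _; rewrite mxE. Qed.

Lemma map_mx_derivation1 n : map_mx D (1 : 'M[R]_n) = 0.
Proof. by apply/matrixP => i j; rewrite !mxE derivation_nat. Qed.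

Lemma map_mx_derivation_expmx n (A : 'M[R]_n) k :
  map_mx D (A ^+ k) = \sum_(m < k) A ^+ m *m map_mx D A *m A ^+ (k - m.+1).
Proof.
elim: k => [|k IHk]; first by rewrite big_ord0 map_mx_derivation1.
rewrite exprS -mulmxE map_mx_derivation_mul IHk big_ord_recl expr0 mul1mx subn1.
congr (_ + _); rewrite mulmx_sumr; apply: eq_bigr => m _.
by rewrite exprS -mulmxE !mulmxA.
Qed.

Lemma map_mx_derivation_expmx_inner n (A W : 'M[R]_n) k :
  map_mx D A = A *m W - W *m A ->
  map_mx D (A ^+ k) = A ^+ k *m W - W *m A ^+ k.
Proof.
move=> DA; elim: k => [|k IHk].
  by rewrite expr0 map_mx_derivation1 mulmx1 mul1mx subrr.
rewrite exprS -mulmxE map_mx_derivation_mul DA IHk mulmxBl mulmxBr !mulmxA.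
by rewrite addrC addrA subrK.
Qed.

Lemma map_mx_derivation_expmx0 n (A : 'M[R]_n) k :
  map_mx D A = 0 -> map_mx D (A ^+ k) = 0.
Proof.
move=> DA; rewrite map_mx_derivation_expmx big1 // => m _.
by rewrite DA mulmx0 mul0mx.
Qed.
End MatrixDerivation.

Lemma derivation_trace_expmx_inner (R : comPzRingType) (D : R -> R) n (A W : 'M[R]_n) k :
  derivation D -> map_mx D A = A *m W - W *m A -> D (\tr (A ^+ k)) = 0.
Proof.
move=> Dder DA; rewrite derivation_trace // (map_mx_derivation_expmx_inner Dder k DA).
by rewrite linearB /= mxtrace_mulC subrr.
Qed.

Lemma mderivXi (R : nzRingType) n (i j : 'I_n) :
  mderiv i ('X_j : {mpoly R[n]}) = (j == i)%:R.
Proof.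
rewrite mderivX mnm1E; case: eqP => [->|_]; last by rewrite scale0r.
have -> : (U_(i) - U_(i) = 0)%MM by apply/mnmP => k; rewrite mnmBE mnm0E subnn.
by rewrite mpolyX0 scale1r.
Qed.

Section ReducedBracket.
Variables (C : numClosedFieldType) (d : nat).
Local Notation Sr := (Sr C d).
Local Notation Sa := (Sa C d).

HB.instance Definition _ :=
  GRing.RMorphism.copy (@incl C d) (mmap (@mpolyC _ C) incl_var).
HB.instance Definition _ :=
  GRing.RMorphism.copy (@proj C d) (mmap (@mpolyC _ C) proj_var).

Lemma proj_incl (f : Sr) : proj (incl f) = f.
Proof.
elim/mpolyind: f => [|c m f _ _ IHf]; first by rewrite !rmorph0.
rewrite !rmorphD /= IHf; congr (_ + _).
rewrite /= /incl /proj mmapZ mmapX /= mul_mpolyC mmapZ /= mul_mpolyC; congr (_ *: _).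
rewrite /mmap1 rmorph_prod mpolyXE_id; apply: eq_bigr => i _.
rewrite rmorphXn /= /incl_var; congr (_ ^+ _).
by case E: (enum_val i) => [[a b]|[a|a]];
  rewrite /xa mmapX mmap1U /proj_var enum_rankK /= /xr /rE /rQ /rP -E enum_valK.
Qed.

Lemma LP_derivation_l (H : Sa) : derivation (LP^~ H).
Proof.
split=> [F G | F G]; rewrite /LP ?mulr_suml ?mulr_sumr -big_split /=;
  apply: eq_bigr => x _; rewrite ?mulr_suml ?mulr_sumr -big_split /=;
  apply: eq_bigr => y _; rewrite (mderivD, mderivM); ring.
Qed.

Lemma LP_derivation_r (F : Sa) : derivation (LP F).
Proof.
split=> [G H | G H]; rewrite /LP ?mulr_suml ?mulr_sumr -big_split /=;
  apply: eq_bigr => x _; rewrite ?mulr_suml ?mulr_sumr -big_split /=;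
  apply: eq_bigr => y _; rewrite (mderivD, mderivM); ring.
Qed.

Lemma rbr_derivation_l (h : Sr) : derivation (rbr^~ h).
Proof.
have [LPD LPM] := LP_derivation_l (incl h).
split=> f g /=; rewrite /rbr ?(rmorphD incl) ?(rmorphM incl) ?LPD ?LPM (rmorphD proj) //.
by rewrite !(rmorphM proj) /= !proj_incl.
Qed.

Lemma rbr_derivation_r (f : Sr) : derivation (rbr f).
Proof.
have [LPD LPM] := LP_derivation_r (incl f).
split=> g h /=; rewrite /rbr ?(rmorphD incl) ?(rmorphM incl) ?LPD ?LPM (rmorphD proj) //.
by rewrite !(rmorphM proj) /= !proj_incl.
Qed.

Lemma LP_xa (x y : avar d) : LP (xa x) (xa y) = abr x y :> Sa.
Proof.
rewrite /LP (bigD1 x) //= [X in _ + X]big1 ?addr0 => [|x' x'x]; last first.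
  apply: big1 => y' _.
  by rewrite mderivXi (inj_eq enum_rank_inj) eq_sym (negPf x'x) mul0r mulr0.
rewrite (bigD1 y) //= [X in _ + X]big1 ?addr0 => [|y' y'y].
  by rewrite !mderivXi !eqxx !mulr1.
by rewrite !mderivXi !(inj_eq enum_rank_inj) (eq_sym y) (negPf y'y) !mulr0.
Qed.

Definition avar_of_rvar (u : rvar d) : avar d :=
  match u with
  | inl (i, j) => vE i j
  | inr (inl i) => vQ i
  | inr (inr i) => vP i
  end.

Lemma incl_xr (u : rvar d) : incl (xr u : Sr) = xa (avar_of_rvar u).
Proof.
by rewrite /= /incl /xr mmapX mmap1U /incl_var enum_rankK; case: u => [[i j]|[i|i]].
Qed.

Lemma proj_xa (x : avar d) : proj (xa x : Sa) = proj_var (enum_rank x).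
Proof. by rewrite /= /proj /xa mmapX mmap1U. Qed.

Lemma projZ c (F : Sa) : proj (c *: F) = c *: proj F.
Proof. by rewrite /= /proj mmapZ /= mul_mpolyC. Qed.

Lemma rbr_xr (u v : rvar d) :
  rbr (xr u : Sr) (xr v) = proj (abr (avar_of_rvar u) (avar_of_rvar v)).
Proof. by rewrite /rbr !incl_xr LP_xa. Qed.

Local Notation e i j := (xr (rE i j) : Sr).
Local Notation q i := (xr (rQ i) : Sr).
Local Notation p i := (xr (rP i) : Sr).

Lemma kdZ (i j : 'I_d) (f : Sr) : kd i j *: f = f *+ (i == j).
Proof. by rewrite /kd; case: eqP; rewrite ?scale1r ?scale0r. Qed.

Lemma rbr_ee i j k l : rbr (e i j) (e k l) = e i l *+ (j == k) - e k j *+ (l == i).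
Proof.
by rewrite rbr_xr /= (rmorphB proj) /= !projZ !proj_xa /proj_var !enum_rankK /= !kdZ.
Qed.

Lemma rbr_eq i j k : rbr (e i j) (q k) = q i *+ (j == k).
Proof. by rewrite rbr_xr /= projZ proj_xa /proj_var enum_rankK /= kdZ. Qed.

Lemma rbr_qe k i j : rbr (q k) (e i j) = - (q i *+ (j == k)).
Proof.
by rewrite rbr_xr /= (rmorphN proj) /= projZ proj_xa /proj_var enum_rankK /= kdZ.
Qed.

Lemma rbr_ep i j k : rbr (e i j) (p k) = 0.
Proof. by rewrite rbr_xr /= (rmorph0 proj). Qed.

Lemma rbr_qq k l : rbr (q k) (q l) = 0.
Proof. by rewrite rbr_xr /= (rmorph0 proj). Qed.

Lemma rbr_qp k l : rbr (q k) (p l) = 0.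
Proof. by rewrite rbr_xr /= (rmorph0 proj). Qed.

Lemma rbr_p_xr k v : rbr (p k) (xr v) = 0.
Proof. by rewrite rbr_xr; case: v => [[i j]|[i|i]]; rewrite /= (rmorph0 proj). Qed.

Definition Emx : 'M[Sr]_d := \matrix_(i, j) e i j.
Definition qcol : 'cV[Sr]_d := \col_i q i.
Definition prow : 'rV[Sr]_d := \row_i p i.

Lemma a_trace r : a_ r.+1 = \tr (Emx ^+ r.+1) :> Sr.
Proof.
transitivity (\sum_(f : {ffun 'I_r.+1 -> 'I_d}) (fun i j => e j i) (f ord0) (f ord_max) *
    \prod_(k < r) Emx (f (widen_ord (leqnSn r) k)) (f (lift ord0 k))).
  apply: eq_bigr => f _; rewrite big_ord_recr /= mulrC; congr (e _ _ * _).
    by congr (f _); apply/val_inj; rewrite /= modnn.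
  apply: eq_bigr => k _; rewrite mxE; congr (e _ _); congr (f _); apply/val_inj.
  by rewrite /= modn_small // ltnS.
rewrite (sum_paths_expmx _ _ (fun i j => e j i)) exchange_big; apply: eq_bigr => j _.
by rewrite exprS -mulmxE mxE; apply: eq_bigr => i _; rewrite mxE.
Qed.

Lemma b_bilinear s : b_ s = (prow *m Emx ^+ s *m qcol) 0 0 :> Sr.
Proof.
transitivity (\sum_(f : {ffun 'I_s.+1 -> 'I_d}) (fun i j => p i * q j) (f ord0) (f ord_max) *
    \prod_(k < s) Emx (f (widen_ord (leqnSn s) k)) (f (lift ord0 k))).
  by apply: eq_bigr => f _; rewrite /= mulrAC; under [in RHS]eq_bigr do rewrite mxE.
rewrite (sum_paths_expmx _ _ (fun i j => p i * q j)) mxE exchange_big; apply: eq_bigr => j _.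
rewrite !mxE mulr_suml; apply: eq_bigr => i _.
by rewrite !mxE mulrAC.
Qed.

Lemma map_rbr_e_Emx k l :
  map_mx (rbr^~ (e k l)) Emx = Emx *m delta_mx l k - delta_mx l k *m Emx.
Proof.
apply/matrixP => i j.
by rewrite !(mul_mx_deltaE, mul_delta_mxE, mxE) rbr_ee (eq_sym l i).
Qed.

Lemma map_rbr_e_qcol k l : map_mx (rbr^~ (e k l)) qcol = - (delta_mx l k *m qcol).
Proof.
by apply/matrixP => i j; rewrite !(mul_delta_mxE, mxE) rbr_qe (eq_sym l i).
Qed.

Lemma map_rbr_q_Emx k : map_mx (rbr^~ (q k)) Emx = qcol *m delta_mx 0 k.
Proof. by apply/matrixP => i j; rewrite !(mul_mx_deltaE, mxE) rbr_eq. Qed.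

Lemma map_rbr_q_qcol k : map_mx (rbr^~ (q k)) qcol = 0.
Proof. by apply/matrixP => i j; rewrite !mxE rbr_qq. Qed.

Lemma map_rbr_p_Emx k : map_mx (rbr^~ (p k)) Emx = 0.
Proof. by apply/matrixP => i j; rewrite !mxE rbr_ep. Qed.

Lemma map_rbr_p_qcol k : map_mx (rbr^~ (p k)) qcol = 0.
Proof. by apply/matrixP => i j; rewrite !mxE rbr_qp. Qed.

Lemma map_rbr_prow v : map_mx (rbr^~ (xr v)) prow = 0.
Proof. by apply/matrixP => i j; rewrite !mxE rbr_p_xr. Qed.

Lemma rbr_a_e r k l : rbr (a_ r.+1) (e k l) = 0.
Proof.
rewrite a_trace.
exact: (derivation_trace_expmx_inner _ (rbr_derivation_l _) (map_rbr_e_Emx k l)).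
Qed.

Lemma rbr_a_p r k : rbr (a_ r.+1) (p k) = 0.
Proof.
rewrite a_trace (derivation_trace (rbr_derivation_l _)).
rewrite (map_mx_derivation_expmx0 (rbr_derivation_l _)) ?mxtrace0 //.
exact: map_rbr_p_Emx.
Qed.

Lemma rbr_a_q r k : rbr (a_ r.+1) (q k) = r.+1%:R * (Emx ^+ r *m qcol) k 0.
Proof.
rewrite a_trace (derivation_trace (rbr_derivation_l _)).
rewrite (map_mx_derivation_expmx (rbr_derivation_l _)).
rewrite map_rbr_q_Emx linear_sum /= (eq_bigr (fun=> (Emx ^+ r *m qcol) k 0)) => [|m _].
  by rewrite sumr_const card_ord mulr_natl.
rewrite subSS !mulmxA -[_ *m delta_mx 0 k *m _]mulmxA mxtrace_mulC trace_mx11.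
rewrite -!mulmxA (mulmxA (Emx ^+ _)) mulmx_expmx subnK; last by rewrite -ltnS.
by rewrite mul_delta_mxE eqxx mulr1n.
Qed.

Lemma rbr_b_e r k l : rbr (b_ r) (e k l) = - ((Emx ^+ r *m qcol) k 0 * prow 0 l).
Proof.
rewrite b_bilinear (derivation_bilinear_form (rbr_derivation_l _)).
rewrite map_rbr_prow (map_mx_derivation_expmx_inner (rbr_derivation_l _) _ (map_rbr_e_Emx k l)).
rewrite map_rbr_e_qcol !mul0mx add0r mulmxBr mulmxBl mulmxN !mulmxA addrAC subrr add0r.
by rewrite mxE -mulmxA mul_row_delta_colE mulrC.
Qed.

Lemma rbr_b_q r k :
  rbr (b_ r) (q k) = \sum_(m < r) b_ m * (Emx ^+ (r - m.+1) *m qcol) k 0.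
Proof.
rewrite b_bilinear (derivation_bilinear_form (rbr_derivation_l _)).
rewrite map_rbr_prow map_rbr_q_qcol (map_mx_derivation_expmx (rbr_derivation_l _)).
rewrite map_rbr_q_Emx !mul0mx add0r mulmx0 addr0 mulmx_sumr mulmx_suml summxE.
apply: eq_bigr => m _.
have -> : prow *m (Emx ^+ m *m (qcol *m 'e_k) *m Emx ^+ (r - m.+1)) *m qcol =
          (prow *m Emx ^+ m *m qcol) *m ('e_k *m (Emx ^+ (r - m.+1) *m qcol)).
  by rewrite !mulmxA.
by rewrite mul_col_rowE mul_delta_mxE eqxx mulr1n -b_bilinear.
Qed.

Lemma rbr_b_p r k : rbr (b_ r) (p k) = 0.
Proof.
rewrite b_bilinear (derivation_bilinear_form (rbr_derivation_l _)).
rewrite map_rbr_prow map_rbr_p_qcol.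
rewrite (map_mx_derivation_expmx0 (rbr_derivation_l _) _ (map_rbr_p_Emx k)).
by rewrite !(mul0mx, mulmx0, addr0) mxE.
Qed.

Lemma rbr_a_a r s : rbr (a_ r.+1 : Sr) (a_ s.+1) = 0.
Proof.
rewrite (a_trace s) (derivation_trace (rbr_derivation_r _)).
rewrite (map_mx_derivation_expmx0 (rbr_derivation_r _)) ?mxtrace0 //.
by apply/matrixP => i j; rewrite !mxE rbr_a_e.
Qed.

Lemma rbr_a_b r s : rbr (a_ r.+1 : Sr) (b_ s) = r.+1%:R * b_ (r + s).
Proof.
have Dp : map_mx (rbr (a_ r.+1)) prow = 0.
  by apply/matrixP => i j; rewrite !mxE rbr_a_p.
have DE : map_mx (rbr (a_ r.+1)) Emx = 0.
  by apply/matrixP => i j; rewrite !mxE rbr_a_e.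
have Dq : map_mx (rbr (a_ r.+1)) qcol = r.+1%:R *: (Emx ^+ r *m qcol).
  by apply/matrixP => i j; rewrite (ord1 j) [RHS]mxE -rbr_a_q !mxE.
rewrite (b_bilinear s) (derivation_bilinear_form (rbr_derivation_r _)).
rewrite Dp (map_mx_derivation_expmx0 (rbr_derivation_r _) _ DE) Dq.
rewrite !(mul0mx, mulmx0, add0r) -scalemxAr mxE mulmxA -(mulmxA prow).
by rewrite mulmx_expmx addnC -b_bilinear.
Qed.

Lemma rbr_b_b_expand r s : rbr (b_ r : Sr) (b_ s) =
  \sum_(0 <= m < r) b_ m * b_ (s + (r - m.+1)) -
  \sum_(0 <= m < s) b_ (m + r) * b_ (s - m.+1).
Proof.
have Dp : map_mx (rbr (b_ r)) prow = 0.
  by apply/matrixP => i j; rewrite !mxE rbr_b_p.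
have DE : map_mx (rbr (b_ r)) Emx = - (Emx ^+ r *m qcol *m prow).
  by apply/matrixP => k l; rewrite [RHS]mxE mul_col_rowE -rbr_b_e !mxE.
have Dq : map_mx (rbr (b_ r)) qcol = \sum_(m < r) b_ m *: (Emx ^+ (r - m.+1) *m qcol).
  apply/matrixP => k j; rewrite (ord1 j) summxE.
  by under eq_bigr do rewrite mxE; rewrite -rbr_b_q !mxE.
rewrite (b_bilinear s) (derivation_bilinear_form (rbr_derivation_r _)) Dp Dq.
rewrite (map_mx_derivation_expmx (rbr_derivation_r _)) DE !mul0mx add0r mxE addrC !big_mkord.
congr (_ + _).
  rewrite mulmx_sumr summxE; apply: eq_bigr => m _.
  by rewrite -scalemxAr mxE mulmxA -(mulmxA prow) mulmx_expmx -b_bilinear.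
rewrite mulmx_sumr mulmx_suml summxE -sumrN; apply: eq_bigr => m _.
have -> : prow *m (Emx ^+ m *m - (Emx ^+ r *m qcol *m prow) *m Emx ^+ (s - m.+1)) *m qcol =
    - ((prow *m Emx ^+ (m + r) *m qcol) *m (prow *m Emx ^+ (s - m.+1) *m qcol)).
  by rewrite -mulmx_expmx mulmxN mulNmx mulmxN mulNmx !mulmxA.
by rewrite mxE mul_col_rowE -!b_bilinear.
Qed.

Lemma rbr_b_b r s : (s <= r)%N ->
  rbr (b_ r : Sr) (b_ s) = \sum_(s <= m < r) b_ m * b_ (r + s - m - 1).
Proof.
move=> sr; rewrite rbr_b_b_expand.
have -> : \sum_(0 <= m < s) b_ (m + r) * b_ (s - m.+1) =
          \sum_(0 <= m < s) b_ m * b_ (r + s - m - 1) :> Sr.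
  rewrite big_nat_rev; apply: eq_big_nat => m /andP[_ ms].
  by rewrite mulrC; congr (b_ _ * b_ _); lia.
rewrite (eq_big_nat _ _ (F2 := fun m => b_ m * b_ (r + s - m - 1))) => [|m /andP[_ mr]].
  by rewrite (big_cat_nat (leq0n s) sr) /= [X in X - _]addrC addrK.
by congr (b_ _ * b_ _); lia.
Qed.

End ReducedBracket.

Theorem proposition3p6 (C : numClosedFieldType) (d : nat) :
  (forall r s : nat, (1 <= r)%N -> (1 <= s)%N ->
     rbr (a_ r : Sr C d) (a_ s) = 0) /\
  (forall r s : nat, (1 <= r)%N ->
     rbr (a_ r : Sr C d) (b_ s) = r%:R * b_ (r + s - 1)) /\
  (forall r s : nat, (s <= r)%N ->
     rbr (b_ r : Sr C d) (b_ s) =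
       \sum_(s <= m < r) b_ m * b_ (r + s - m - 1)).
Proof.
split; [|split].
- by move=> [|r] [|s] // _ _; apply: rbr_a_a.
- by move=> [|r] s // _; rewrite rbr_a_b addSn subSS subn0.
- exact: rbr_b_b.
Qed.
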